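(* Let $\mathcal{M}=\langle M,\circ_M,e_M\rangle$ and $\mathcal{N}=\langle N,\circ_N,e_N\rangle$ be mge monoids. Then the Cartesian product $\mathcal{M}\times\mathcal{N}$ (with componentwise operation and unit $\langle e_M,e_N\rangle$) is an mge monoid.
   Context: In a monoid $\langle M,\circ,e\rangle$, a tuple $\langle m_1,\dots,m_n\rangle\in M^n$ is equalizable if there is $\langle x_1,\dots,x_n\rangle\in M^n$ (an equalizer) with $m_1x_1=\dots=m_nx_n$; an equalizer is a most general equalizer (mge) if every equalizer has the form $\langle x_1x,\dots,x_nx\rangle$ for some $x\in M$. An mge monoid is a monoid with right cancellation ($ac=bc\Rightarrow a=b$) in which every equalizable pair has an mge. *)

Definition is_monoid {M : Type} (op : M -> M -> M) (e : M) : Prop :=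
  (forall a b c, op a (op b c) = op (op a b) c) /\
  (forall a, op e a = a) /\ (forall a, op a e = a).

Definition right_cancellative {M : Type} (op : M -> M -> M) : Prop :=
  forall a b c, op a c = op b c -> a = b.

Definition is_equalizer {M : Type} (op : M -> M -> M) (m1 m2 x1 x2 : M) : Prop :=
  op m1 x1 = op m2 x2.

Definition equalizable {M : Type} (op : M -> M -> M) (m1 m2 : M) : Prop :=
  exists x1 x2, is_equalizer op m1 m2 x1 x2.

Definition is_mge {M : Type} (op : M -> M -> M) (m1 m2 x1 x2 : M) : Prop :=
  is_equalizer op m1 m2 x1 x2 /\
  forall y1 y2, is_equalizer op m1 m2 y1 y2 ->
    exists x, y1 = op x1 x /\ y2 = op x2 x.

Definition mge_monoid {M : Type} (op : M -> M -> M) (e : M) : Prop :=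
  is_monoid op e /\ right_cancellative op /\
  forall m1 m2, equalizable op m1 m2 -> exists x1 x2, is_mge op m1 m2 x1 x2.

Definition prod_op {M N : Type} (opM : M -> M -> M) (opN : N -> N -> N)
  (a b : M * N) : M * N := (opM (fst a) (fst b), opN (snd a) (snd b)).


Section Product.

Variables (M N : Type) (opM : M -> M -> M) (opN : N -> N -> N).

Let op := prod_op opM opN.

Lemma prod_monoid (eM : M) (eN : N) :
  is_monoid opM eM -> is_monoid opN eN -> is_monoid op (eM, eN).
Proof.
  intros [AM [LM RM]] [AN [LN RN]]; unfold op, prod_op.
  split; [|split].
  - intros [a1 a2] [b1 b2] [c1 c2]; simpl; rewrite AM, AN; reflexivity.
  - intros [a1 a2]; simpl; rewrite LM, LN; reflexivity.
  - intros [a1 a2]; simpl; rewrite RM, RN; reflexivity.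
Qed.

Lemma prod_right_cancellative :
  right_cancellative opM -> right_cancellative opN -> right_cancellative op.
Proof.
  intros CM CN [a1 a2] [b1 b2] [c1 c2] H.
  injection H as H1 H2.
  rewrite (CM _ _ _ H1), (CN _ _ _ H2); reflexivity.
Qed.

Lemma prod_equalizerE (m1 m2 x1 x2 : M) (n1 n2 y1 y2 : N) :
  is_equalizer op (m1, n1) (m2, n2) (x1, y1) (x2, y2) <->
  is_equalizer opM m1 m2 x1 x2 /\ is_equalizer opN n1 n2 y1 y2.
Proof.
  unfold is_equalizer, op, prod_op; simpl; split.
  - intros E; injection E as E1 E2; split; assumption.
  - intros [E1 E2]; rewrite E1, E2; reflexivity.
Qed.

Lemma prod_equalizable (m1 m2 : M) (n1 n2 : N) :
  equalizable op (m1, n1) (m2, n2) ->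
  equalizable opM m1 m2 /\ equalizable opN n1 n2.
Proof.
  intros [[x1 y1] [[x2 y2] E]].
  apply prod_equalizerE in E as [E1 E2].
  split; do 2 eexists; eassumption.
Qed.

Lemma prod_mge (m1 m2 x1 x2 : M) (n1 n2 y1 y2 : N) :
  is_mge opM m1 m2 x1 x2 -> is_mge opN n1 n2 y1 y2 ->
  is_mge op (m1, n1) (m2, n2) (x1, y1) (x2, y2).
Proof.
  intros [EM GM] [EN GN]; split.
  - apply prod_equalizerE; split; assumption.
  - intros [z1 w1] [z2 w2] F.
    apply prod_equalizerE in F as [F1 F2].
    destruct (GM z1 z2 F1) as [x [-> ->]].
    destruct (GN w1 w2 F2) as [y [-> ->]].
    exists (x, y); split; reflexivity.
Qed.

End Product.

Theorem lemma1 (M N : Type) (opM : M -> M -> M) (eM : M)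
  (opN : N -> N -> N) (eN : N) :
  mge_monoid opM eM -> mge_monoid opN eN ->
  mge_monoid (prod_op opM opN) (eM, eN).
Proof.
  intros [monM [canM mgeM]] [monN [canN mgeN]].
  split; [|split].
  - apply prod_monoid; assumption.
  - apply prod_right_cancellative; assumption.
  - intros [m1 n1] [m2 n2] Heq.
    apply prod_equalizable in Heq as [HeqM HeqN].
    destruct (mgeM m1 m2 HeqM) as [x1 [x2 Hx]].
    destruct (mgeN n1 n2 HeqN) as [y1 [y2 Hy]].
    exists (x1, y1), (x2, y2).
    apply prod_mge; assumption.
Qed.
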